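(* Let $\Delta x>0$, $v>0$, $w>0$, $q_{max}>0$, $0\le n\le n_{max}$, and put $\bar n=n_{max}-n$. Let $U_{fw},U_{bw},Q,Y_{fw},Y_{bw}\in F$ with $U_{fw}(0)=U_{bw}(0)=Y_{fw}(0)=Y_{bw}(0)=0$ satisfy the road-section dynamics $$Q=A*Q\oplus B*U,\qquad Y=C*Q\oplus e,$$ where $U=(U_{fw},U_{bw})^T$, $Y=(Y_{fw},Y_{bw})^T$, $A=\gamma^{q_{max}\Delta x/v}\delta^{\Delta x/v}$ (a scalar), $B=(\gamma^{n}\delta^{\Delta x/v}\ \ e)$ (a $1\times 2$ row), $C=(e\ \ \gamma^{\bar n}\delta^{\Delta x/w})^T$ (a $2\times 1$ column), and $e$ in the second equation denotes the vector $(e,e)^T$. Explicitly, $Q(t)=\min\{Q(t-\Delta x/v)+q_{max}\Delta x/v,\ U_{fw}(t-\Delta x/v)+n,\ U_{bw}(t)\}$, $Y_{fw}=Q$, $Y_{bw}(t)=Q(t-\Delta x/w)+\bar n$ for $t>0$. Define $Z_{fw}(t)=\max(Y_{fw}(t)-n,0)$, $Z_{bw}(t)=\max(Y_{bw}(t)-\bar n,0)$ and $Z=(Z_{fw},Z_{bw})^T$. Then the matrix $H*(e\oplus C*A^{*}*B)$ is a service matrix for the road section seen as a server with input $U$ and output $Z$, i.e. $$Z\ge H*(e\oplus C*A^{*}*B)*U,\qquad H=\begin{pmatrix}\gamma^{-n}& e\\ e&\gamma^{-\bar n}\end{pmatrix},$$ where the $e$ added to $C*A^**B$ is the $2\times 2$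 identity matrix.
   Context: $F$ denotes the set of non-decreasing, non-negative functions of time $t\ge 0$. Min-plus operations: $(f\oplus g)(t)=\min(f(t),g(t))$, $(f*g)(t)=\min_{0\le s\le t}(f(s)+g(t-s))$; juxtaposition $fg$ means $f*g$. Special signals: $\varepsilon(t)=+\infty$ for all $t$; $e(0)=0$, $e(t)=+\infty$ for $t>0$; the gain $\gamma^p(0)=p$, $\gamma^p(t)=+\infty$ for $t>0$ (so $\gamma^p*f=f+p$; $p$ may be negative); the shift $\delta^T(t)=0$ for $0\le t\le T$, $\delta^T(t)=+\infty$ for $t>T$ (so $(\delta^T*f)(t)=f(\max(t-T,0))$ for nondecreasing $f$). Powers $f^0=e$, $f^k=f^{k-1}*f$; sub-additive closure $f^*=\bigoplus_{k\ge0}f^k$. For matrices, $(A\oplus B)_{ij}=A_{ij}\oplus B_{ij}$, $(A*B)_{ij}=\min_k A_{ik}*B_{kj}$; the identity matrix has $e$ on the diagonal and $\varepsilon$ off the diagonal. A matrix $\beta$ is a service matrix for a server with input $U$ and output $Z$ if $Z\ge\beta*U$ componentwise. Interpretation: $U_{fw}$ is the cumulated demand inflow from upstream, $U_{bw}$ the cumulated supply of the downstream section, $n$ the initial number of cars, $n_{max}$ the capacity (max number of cars) of the section. *)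

From Stdlib Require Import Reals Lra List ClassicalEpsilon.
Open Scope R_scope.

(** Extended reals: +oo is the min-plus zero (epsilon); -oo only for totality of inf. *)
Inductive Rbar : Type := Fin (r : R) | PInf | MInf.

Definition Rbar_le (x y : Rbar) : Prop :=
  match x, y with
  | MInf, _ => True
  | _, PInf => True
  | Fin a, Fin b => a <= b
  | _, _ => False
  end.

Definition Rbar_plus (x y : Rbar) : Rbar :=
  match x, y with
  | PInf, _ | _, PInf => PInf
  | MInf, _ | _, MInf => MInf
  | Fin a, Fin b => Fin (a + b)
  end.

Definition Rbar_min (x y : Rbar) : Rbar :=
  match x, y with
  | PInf, y => y
  | x, PInf => x
  | MInf, _ | _, MInf => MInf
  | Fin a, Fin b => Fin (Rmin a b)
  end.

Definition is_glb (P : Rbar -> Prop) (m : Rbar) : Prop :=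
  (forall x, P x -> Rbar_le m x) /\
  (forall l, (forall x, P x -> Rbar_le l x) -> Rbar_le l m).

(** Infimum of a set of extended reals (exists and is unique; chosen by epsilon). *)
Definition Rbar_inf (P : Rbar -> Prop) : Rbar :=
  epsilon (inhabits PInf) (fun m => is_glb P m).

(** Signals: functions of time; only t >= 0 is relevant. *)
Definition signal := R -> Rbar.

Definition lift (f : R -> R) : signal := fun t => Fin (f t).

Definition inF (f : R -> R) : Prop :=
  (forall t, 0 <= t -> 0 <= f t) /\ (forall s t, 0 <= s -> s <= t -> f s <= f t).

Definition oplus (f g : signal) : signal := fun t => Rbar_min (f t) (g t).

Definition conv (f g : signal) : signal := fun t =>
  Rbar_inf (fun x => exists s, 0 <= s <= t /\ x = Rbar_plus (f s) (g (t - s))).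

Definition eps : signal := fun _ => PInf.
Definition e : signal := fun t => if Req_EM_T t 0 then Fin 0 else PInf.
Definition gamma (p : R) : signal := fun t => if Req_EM_T t 0 then Fin p else PInf.
Definition delta (T : R) : signal := fun t => if Rle_dec t T then Fin 0 else PInf.

Fixpoint spow (f : signal) (k : nat) : signal :=
  match k with O => e | S k' => conv (spow f k') f end.

Definition star (f : signal) : signal := fun t =>
  Rbar_inf (fun x => exists k, x = spow f k t).

(** Matrices of signals, indexed by nat (dimensions implicit; entries outside are unused). *)
Definition mat := nat -> nat -> signal.

Definition madd (A B : mat) : mat := fun i j => oplus (A i j) (B i j).

Definition mmul (p : nat) (A B : mat) : mat := fun i j =>
  fold_right oplus eps (map (fun l => conv (A i l) (B l j)) (seq 0 p)).

Definition mid : mat := fun i j => if Nat.eqb i j then e else eps.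

Definition scal (a : signal) : mat := fun i j =>
  match i, j with 0, 0 => a | _, _ => eps end.

Definition vec2 (f g : signal) : mat := fun i j =>
  match i, j with 0, 0 => f | 1, 0 => g | _, _ => eps end.

Definition Amat (dx v qmax : R) : signal := conv (gamma (qmax * dx / v)) (delta (dx / v)).

Definition Bmat (dx v n : R) : mat := fun i j =>
  match i, j with
  | 0, 0 => conv (gamma n) (delta (dx / v))
  | 0, 1 => e
  | _, _ => eps end.

Definition Cmat (dx w nb : R) : mat := fun i j =>
  match i, j with
  | 0, 0 => e
  | 1, 0 => conv (gamma nb) (delta (dx / w))
  | _, _ => eps end.

Definition Hmat (n nb : R) : mat := fun i j =>
  match i, j with
  | 0, 0 => gamma (- n)
  | 0, 1 => e
  | 1, 0 => e
  | 1, 1 => gamma (- nb)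
  | _, _ => eps end.

Definition service2 (beta : mat) (U Z : mat) : Prop :=
  forall i, (i < 2)%nat -> forall t, 0 <= t -> Rbar_le (mmul 2 beta U i 0%nat t) (Z i 0%nat t).

(* Q solves Q = A Q (+) B U, and the delay dx/v in A makes backward unfolding terminate:
   following at each time the branch of
     Q(t) = min (q + Q(t - dx/v), n + Ufw(t - dx/v), Ubw(t))
   that attains the minimum, one reaches an input branch after finitely many steps of length
   dx/v.  This exhibits a single term A^k(s) + B_0j(s') + U_j(t - s - s') of (A^* B U)(t) that
   is at most Q(t).  Since Yfw = Q and Ybw(t) = nmax - n + Q(t - dx/w), removing the offsets
   n and nmax - n (the role of H) shows that Z_i(t) dominates the corresponding term of
   (H C A^* B U)_i(t), hence (H (e (+) C A^* B) U)_i(t). *)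
From Stdlib Require Import Reals Lra Lia List Classical ClassicalEpsilon.
Open Scope R_scope.

Lemma Rbar_le_refl x : Rbar_le x x.
Proof. destruct x; simpl; auto; lra. Qed.

Lemma Rbar_le_trans x y z : Rbar_le x y -> Rbar_le y z -> Rbar_le x z.
Proof. destruct x, y, z; simpl; auto; try tauto; lra. Qed.

Lemma Rbar_le_antisym x y : Rbar_le x y -> Rbar_le y x -> x = y.
Proof. destruct x, y; simpl; try tauto; intros; f_equal; lra. Qed.

Lemma Rbar_le_PInf x : Rbar_le x PInf.
Proof. destruct x; simpl; auto. Qed.

Lemma Rbar_min_le_l x y : Rbar_le (Rbar_min x y) x.
Proof. destruct x, y; simpl; auto; try apply Rmin_l; lra. Qed.

Lemma Rbar_min_le_r x y : Rbar_le (Rbar_min x y) y.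
Proof. destruct x, y; simpl; auto; try apply Rmin_r; lra. Qed.

Lemma Rbar_min_PInf_r x : Rbar_min x PInf = x.
Proof. destruct x; reflexivity. Qed.

Lemma is_glb_exists (P : Rbar -> Prop) : exists m, is_glb P m.
Proof.
  destruct (classic (forall x, P x -> x = PInf)) as [HP|HP].
  { exists PInf; split.
    - intros x Px; rewrite (HP x Px); apply Rbar_le_refl.
    - intros l _; apply Rbar_le_PInf. }
  apply not_all_ex_not in HP as [x0 Hx0].
  apply imply_to_and in Hx0 as [Px0 Nx0].
  destruct (classic (exists c, forall x, P x -> Rbar_le (Fin c) x)) as [[c Hc]|Hunb].
  - destruct x0 as [r0| |]; [|congruence|specialize (Hc _ Px0); contradiction].
    (* the finite part of P, reflected so that [completeness] (a sup) gives the inf *)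
    set (E := fun r => P (Fin (- r))).
    assert (HE : bound E).
    { exists (- c); intros r Er; specialize (Hc _ Er); simpl in Hc; lra. }
    assert (Er0 : E (- r0)) by (unfold E; rewrite Ropp_involutive; exact Px0).
    destruct (completeness E HE (ex_intro _ _ Er0)) as [m [Hub Hlub]].
    exists (Fin (- m)); split.
    + intros [r| |] Px; simpl; auto.
      * assert (E (- r)) by (unfold E; rewrite Ropp_involutive; exact Px).
        specialize (Hub _ H); lra.
      * specialize (Hc _ Px); contradiction.
    + intros [a| |] Hl; simpl; auto.
      * assert (m <= - a) by (apply Hlub; intros r Er; specialize (Hl _ Er); simpl in Hl; lra).
        lra.
      * specialize (Hl _ Px0); contradiction.
  - exists MInf; split; [intros; exact I|].
    intros [a| |] Hl; simpl; auto.
    + apply Hunb; exists a; exact Hl.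
    + specialize (Hl _ Px0); destruct x0; simpl in Hl; tauto.
Qed.

Lemma Rbar_inf_spec P : is_glb P (Rbar_inf P).
Proof. unfold Rbar_inf; apply epsilon_spec, is_glb_exists. Qed.

Lemma Rbar_inf_le (P : Rbar -> Prop) x : P x -> Rbar_le (Rbar_inf P) x.
Proof. apply (proj1 (Rbar_inf_spec P)). Qed.

Lemma Rbar_inf_attained (P : Rbar -> Prop) m :
  P m -> (forall x, P x -> Rbar_le m x) -> Rbar_inf P = m.
Proof.
  intros Pm Hm; apply Rbar_le_antisym.
  - apply Rbar_inf_le, Pm.
  - apply (proj2 (Rbar_inf_spec P)), Hm.
Qed.

Lemma conv_le_fin f g t s a b :
  0 <= s <= t -> Rbar_le (f s) (Fin a) -> Rbar_le (g (t - s)) (Fin b) ->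
  Rbar_le (conv f g t) (Fin (a + b)).
Proof.
  intros Hs Hf Hg; eapply Rbar_le_trans.
  - apply Rbar_inf_le; exists s; split; [exact Hs|reflexivity].
  - destruct (f s), (g (t - s)); simpl in *; auto; try tauto; lra.
Qed.

Lemma conv_attained f g t s0 :
  0 <= s0 <= t ->
  (forall s, 0 <= s <= t ->
     Rbar_le (Rbar_plus (f s0) (g (t - s0))) (Rbar_plus (f s) (g (t - s)))) ->
  conv f g t = Rbar_plus (f s0) (g (t - s0)).
Proof.
  intros Hs0 Hmin; apply Rbar_inf_attained; [exists s0; auto|].
  intros x [s [Hs ->]]; auto.
Qed.

Lemma gamma_0 p : gamma p 0 = Fin p.
Proof. unfold gamma; destruct (Req_EM_T 0 0); congruence. Qed.

Lemma e_0 : e 0 = Fin 0.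
Proof. exact (gamma_0 0). Qed.

Lemma gamma_neq0 p t : t <> 0 -> gamma p t = PInf.
Proof. unfold gamma; destruct (Req_EM_T t 0); congruence. Qed.

Lemma e_neq0 t : t <> 0 -> e t = PInf.
Proof. exact (gamma_neq0 0 t). Qed.

Lemma conv_gamma_l p f t : 0 <= t -> conv (gamma p) f t = Rbar_plus (Fin p) (f t).
Proof.
  intros Ht; rewrite (conv_attained _ _ _ 0).
  - rewrite gamma_0, Rminus_0_r; reflexivity.
  - lra.
  - intros s Hs; destruct (Req_EM_T s 0) as [->|Hs0]; [apply Rbar_le_refl|].
    rewrite (gamma_neq0 p s Hs0); apply Rbar_le_PInf.
Qed.

Lemma conv_e_l f t : 0 <= t -> conv e f t = f t.
Proof.
  intros Ht; change e with (gamma 0); rewrite conv_gamma_l by exact Ht.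
  destruct (f t); simpl; auto; f_equal; ring.
Qed.

Lemma conv_gamma_delta p T x : 0 <= x <= T -> conv (gamma p) (delta T) x = Fin p.
Proof.
  intros Hx; rewrite conv_gamma_l by lra; unfold delta.
  destruct (Rle_dec x T); [simpl; f_equal; ring|lra].
Qed.

Definition nondecreasing (f : R -> R) : Prop := forall s t, 0 <= s -> s <= t -> f s <= f t.

Lemma Rmax_sub_0_bounds t T : 0 <= t -> 0 <= T ->
  0 <= Rmax (t - T) 0 <= t /\ t - Rmax (t - T) 0 <= T.
Proof. intros; unfold Rmax; destruct (Rle_dec (t - T) 0); lra. Qed.

Lemma conv_gamma_delta_lift p T f t : nondecreasing f -> 0 <= T -> 0 <= t ->
  conv (conv (gamma p) (delta T)) (lift f) t = Fin (p + f (Rmax (t - T) 0)).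
Proof.
  intros Hf HT Ht; destruct (Rmax_sub_0_bounds t T Ht HT) as [Ht' HtT].
  rewrite (conv_attained _ _ _ (t - Rmax (t - T) 0)).
  - rewrite conv_gamma_delta by lra; unfold lift.
    replace (t - (t - Rmax (t - T) 0)) with (Rmax (t - T) 0) by ring; reflexivity.
  - lra.
  - intros s Hs; rewrite (conv_gamma_delta _ _ (t - _)) by lra.
    rewrite conv_gamma_l by lra; unfold delta, lift.
    destruct (Rle_dec s T); [|apply Rbar_le_PInf].
    replace (t - (t - Rmax (t - T) 0)) with (Rmax (t - T) 0) by ring.
    assert (f (Rmax (t - T) 0) <= f (t - s)) by (apply Hf; [lra|apply Rmax_lub; lra]).
    simpl; lra.
Qed.

Lemma fold_oplus_le (l : list signal) g t : In g l -> Rbar_le (fold_right oplus eps l t) (g t).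
Proof.
  induction l as [|h l IH]; simpl; [contradiction|]; intros [<-|Hg]; unfold oplus.
  - apply Rbar_min_le_l.
  - eapply Rbar_le_trans; [apply Rbar_min_le_r|auto].
Qed.

Lemma mmul_le_term p (A B : mat) i j l t :
  (l < p)%nat -> Rbar_le (mmul p A B i j t) (conv (A i l) (B l j) t).
Proof.
  intros Hl; apply fold_oplus_le, (in_map (fun l => conv (A i l) (B l j))), in_seq; lia.
Qed.

Lemma mmul_1 (A B : mat) i j t : mmul 1 A B i j t = conv (A i 0%nat) (B 0%nat j) t.
Proof. apply Rbar_min_PInf_r. Qed.

Lemma mmul_2 (A B : mat) i j t : mmul 2 A B i j t =
  Rbar_min (conv (A i 0%nat) (B 0%nat j) t) (Rbar_min (conv (A i 1%nat) (B 1%nat j) t) PInf).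
Proof. reflexivity. Qed.

Lemma madd_le_r (A B : mat) i j t : Rbar_le (madd A B i j t) (B i j t).
Proof. apply Rbar_min_le_r. Qed.

Lemma star_le_spow f k t : Rbar_le (star f t) (spow f k t).
Proof. apply Rbar_inf_le; exists k; reflexivity. Qed.

(* x dominates one term of the min-plus expansion of (A^* B U)(t); tracking single terms
   avoids proving associativity of the convolution. *)
Definition star_term_le (A : signal) (B U : mat) (t x : R) : Prop :=
  exists k j s s' a b u, (j < 2)%nat /\ 0 <= s /\ 0 <= s' /\ s + s' <= t /\
    Rbar_le (spow A k s) (Fin a) /\ Rbar_le (B 0%nat j s') (Fin b) /\
    Rbar_le (U j 0%nat (t - (s + s'))) (Fin u) /\ a + b + u <= x.

Lemma star_term_le_input A (B U : mat) j t s' b u :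
  (j < 2)%nat -> 0 <= s' <= t ->
  Rbar_le (B 0%nat j s') (Fin b) -> Rbar_le (U j 0%nat (t - s')) (Fin u) ->
  star_term_le A B U t (b + u).
Proof.
  intros Hj Hs' Hb Hu; exists 0%nat, j, 0, s', 0, b, u.
  rewrite Rplus_0_l; repeat split; auto; try lra.
  change (spow A 0 0) with (e 0); rewrite e_0; apply Rbar_le_refl.
Qed.

Lemma star_term_le_delay A (B U : mat) t' t x c :
  star_term_le A B U t' x -> 0 <= t' <= t -> Rbar_le (A (t - t')) (Fin c) ->
  star_term_le A B U t (c + x).
Proof.
  intros (k & j & s & s' & a & b & u & Hj & Hs & Hs' & Hst & Ha & Hb & Hu & Hx) Ht Hc.
  exists (S k), j, (s + (t - t')), s', (a + c), b, u.
  replace (t - (s + (t - t') + s')) with (t' - (s + s')) by ring.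
  repeat split; auto; try lra.
  simpl; apply conv_le_fin with s; [lra|exact Ha|].
  replace (s + (t - t') - s) with (t - t') by ring; exact Hc.
Qed.

Lemma service_entry_le (A : signal) (H C B U : mat) i t d h c x :
  (i < 2)%nat -> 0 <= d <= t -> star_term_le A B U (t - d) x ->
  Rbar_le (H i i 0) (Fin h) -> Rbar_le (C i 0%nat d) (Fin c) ->
  Rbar_le (mmul 2 (mmul 2 H (madd mid (mmul 1 (mmul 1 C (scal (star A))) B))) U i 0%nat t)
          (Fin (h + c + x)).
Proof.
  intros Hi Hd (k & j & s & s' & a & b & u & Hj & Hs & Hs' & Hst & Ha & Hb & Hu & Hx) Hh Hc.
  (* use input column j, the diagonal entry H_ii and the summand C A^* B of e (+) C A^* B *)
  apply Rbar_le_trans with (Fin ((h + ((c + a) + b)) + u)); [|simpl; lra].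
  eapply Rbar_le_trans; [apply (mmul_le_term _ _ _ _ _ j); exact Hj|].
  apply conv_le_fin with (d + s + s'); [lra| |].
  - eapply Rbar_le_trans; [apply (mmul_le_term _ _ _ _ _ i); exact Hi|].
    apply conv_le_fin with 0; [lra|exact Hh|].
    eapply Rbar_le_trans; [apply madd_le_r|]; rewrite mmul_1.
    apply conv_le_fin with (d + s); [lra| |].
    + rewrite mmul_1; apply conv_le_fin with d; [lra|exact Hc|].
      simpl; replace (d + s - d) with s by ring.
      eapply Rbar_le_trans; [apply star_le_spow|exact Ha].
    + replace (d + s + s' - 0 - (d + s)) with s' by ring; exact Hb.
  - replace (t - (d + s + s')) with (t - d - (s + s')) by ring; exact Hu.
Qed.

Section RoadSection.

Variables (dx v w qmax n nmax : R) (Ufw Ubw Q Yfw Ybw : R -> R).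

Hypotheses (Htau : 0 < dx / v) (Htau_w : 0 < dx / w) (Hq : 0 < qmax * dx / v) (Hn : 0 <= n)
  (HUfw : nondecreasing Ufw) (HQ : inF Q) (HUbw0 : Ubw 0 = 0).

Hypothesis HQdyn : forall t, 0 <= t ->
  lift Q t = oplus (conv (Amat dx v qmax) (lift Q))
                   (mmul 2 (Bmat dx v n) (vec2 (lift Ufw) (lift Ubw)) 0%nat 0%nat) t.

Hypothesis HYdyn : forall i, (i < 2)%nat -> forall t, 0 <= t ->
  vec2 (lift Yfw) (lift Ybw) i 0%nat t =
  madd (mmul 1 (Cmat dx w (nmax - n)) (scal (lift Q))) (vec2 e e) i 0%nat t.

Lemma Q_recursion t : 0 <= t ->
  Q t = Rmin (qmax * dx / v + Q (Rmax (t - dx / v) 0))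
             (Rmin (n + Ufw (Rmax (t - dx / v) 0)) (Ubw t)).
Proof.
  intros Ht; pose proof (HQdyn t Ht) as E.
  unfold oplus, Amat in E; rewrite mmul_2 in E; cbn [Bmat vec2] in E.
  rewrite !conv_gamma_delta_lift, conv_e_l in E by (exact (proj2 HQ) || auto; lra).
  unfold lift in E; simpl in E; injection E; auto.
Qed.

Lemma Q_0 : Q 0 = 0.
Proof.
  pose proof (Q_recursion 0 (Rle_refl 0)) as E.
  pose proof (Rmin_r (n + Ufw (Rmax (0 - dx / v) 0)) (Ubw 0)).
  pose proof (Rmin_r (qmax * dx / v + Q (Rmax (0 - dx / v) 0))
                     (Rmin (n + Ufw (Rmax (0 - dx / v) 0)) (Ubw 0))).
  pose proof (proj1 HQ 0 (Rle_refl 0)); lra.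
Qed.

Lemma Q_above_step t : 0 <= t ->
  (0 < t -> star_term_le (Amat dx v qmax) (Bmat dx v n) (vec2 (lift Ufw) (lift Ubw))
              (Rmax (t - dx / v) 0) (Q (Rmax (t - dx / v) 0))) ->
  star_term_le (Amat dx v qmax) (Bmat dx v n) (vec2 (lift Ufw) (lift Ubw)) t (Q t).
Proof.
  intros Ht IH; destruct (Rmax_sub_0_bounds t (dx / v) Ht (Rlt_le _ _ Htau)) as [Ht' Htt'].
  pose proof (Q_recursion t Ht) as E; rewrite E.
  apply Rmin_case_strong; intros Hmin.
  - assert (Ht0 : 0 < t).
    { destruct (Req_dec t 0) as [->|]; [|lra].
      rewrite Rmin_left in E by exact Hmin.
      replace (Rmax (0 - dx / v) 0) with 0 in E by (unfold Rmax; destruct Rle_dec; lra); lra. }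
    apply star_term_le_delay with (Rmax (t - dx / v) 0); auto.
    unfold Amat; rewrite conv_gamma_delta by lra; apply Rbar_le_refl.
  - apply Rmin_case_strong; intros _.
    + apply (star_term_le_input _ _ _ 0 t (t - Rmax (t - dx / v) 0)); [lia|lra| |].
      * cbn [Bmat]; rewrite conv_gamma_delta by lra; apply Rbar_le_refl.
      * replace (t - (t - Rmax (t - dx / v) 0)) with (Rmax (t - dx / v) 0) by ring.
        apply Rbar_le_refl.
    + rewrite <- (Rplus_0_l (Ubw t)).
      apply (star_term_le_input _ _ _ 1 t 0); [lia|lra| |].
      * cbn [Bmat]; rewrite e_0; apply Rbar_le_refl.
      * rewrite Rminus_0_r; apply Rbar_le_refl.
Qed.

Lemma Q_above t : 0 <= t ->
  star_term_le (Amat dx v qmax) (Bmat dx v n) (vec2 (lift Ufw) (lift Ubw)) t (Q t).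
Proof.
  intros Ht.
  assert (Hind : forall N t, 0 <= t <= INR N * (dx / v) ->
    star_term_le (Amat dx v qmax) (Bmat dx v n) (vec2 (lift Ufw) (lift Ubw)) t (Q t)).
  { clear t Ht; induction N as [|N IH]; intros t Ht; apply Q_above_step; try lra; intros Ht0.
    - simpl in Ht; lra.
    - apply IH; rewrite S_INR in Ht; unfold Rmax; destruct Rle_dec;
        pose proof (pos_INR N); nra. }
  destruct (INR_unbounded (t / (dx / v))) as [N HN].
  apply (Hind N); split; [exact Ht|].
  apply Rlt_le; unfold Rdiv in HN |- *.
  apply (Rmult_lt_compat_r (dx / v)) in HN; [|exact Htau].
  rewrite Rmult_assoc, Rinv_l, Rmult_1_r in HN; lra.
Qed.

Lemma Yfw_pos t : 0 < t -> Yfw t = Q t.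
Proof.
  intros Ht; pose proof (HYdyn 0 ltac:(lia) t (Rlt_le _ _ Ht)) as E.
  unfold madd, oplus in E; rewrite mmul_1 in E; cbn [vec2 Cmat scal] in E.
  rewrite conv_e_l, e_neq0, Rbar_min_PInf_r in E by lra.
  unfold lift in E; injection E; auto.
Qed.

Lemma Ybw_pos t : 0 < t -> Ybw t = nmax - n + Q (Rmax (t - dx / w) 0).
Proof.
  intros Ht; pose proof (HYdyn 1 ltac:(lia) t (Rlt_le _ _ Ht)) as E.
  unfold madd, oplus in E; rewrite mmul_1 in E; cbn [vec2 Cmat scal] in E.
  rewrite conv_gamma_delta_lift, e_neq0, Rbar_min_PInf_r in E by (exact (proj2 HQ) || lra).
  injection E; auto.
Qed.

Lemma Zfw_ge t : 0 <= t -> Q t - n <= Rmax (Yfw t - n) 0.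
Proof.
  intros Ht; destruct (Req_dec t 0) as [->|Ht0].
  - rewrite Q_0; pose proof (Rmax_r (Yfw 0 - n) 0); lra.
  - rewrite Yfw_pos by lra; apply Rmax_l.
Qed.

Lemma Zbw_ge t : 0 <= t -> Q (Rmax (t - dx / w) 0) <= Rmax (Ybw t - (nmax - n)) 0.
Proof.
  intros Ht; destruct (Req_dec t 0) as [->|Ht0].
  - replace (Rmax (0 - dx / w) 0) with 0 by (unfold Rmax; destruct Rle_dec; lra).
    rewrite Q_0; apply Rmax_r.
  - rewrite Ybw_pos by lra.
    replace (nmax - n + Q (Rmax (t - dx / w) 0) - (nmax - n)) with (Q (Rmax (t - dx / w) 0))
      by ring.
    apply Rmax_l.
Qed.

End RoadSection.

Theorem theorem2 (dx v w qmax n nmax : R) (Ufw Ubw Q Yfw Ybw : R -> R) :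
  0 < dx -> 0 < v -> 0 < w -> 0 < qmax -> 0 <= n -> n <= nmax ->
  inF Ufw -> inF Ubw -> inF Q -> inF Yfw -> inF Ybw ->
  Ufw 0 = 0 -> Ubw 0 = 0 -> Yfw 0 = 0 -> Ybw 0 = 0 ->
  (forall t, 0 <= t ->
     lift Q t = oplus (conv (Amat dx v qmax) (lift Q))
                      (mmul 2 (Bmat dx v n) (vec2 (lift Ufw) (lift Ubw)) 0%nat 0%nat) t) ->
  (forall i, (i < 2)%nat -> forall t, 0 <= t ->
     vec2 (lift Yfw) (lift Ybw) i 0%nat t =
     madd (mmul 1 (Cmat dx w (nmax - n)) (scal (lift Q))) (vec2 e e) i 0%nat t) ->
  service2
    (mmul 2 (Hmat n (nmax - n))
       (madd mid (mmul 1 (mmul 1 (Cmat dx w (nmax - n)) (scal (star (Amat dx v qmax))))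
                        (Bmat dx v n))))
    (vec2 (lift Ufw) (lift Ubw))
    (vec2 (lift (fun t => Rmax (Yfw t - n) 0)) (lift (fun t => Rmax (Ybw t - (nmax - n)) 0))).
Proof.
  intros Hdx Hv Hw Hqm Hn Hnm HUf _ HQf _ _ _ Ub0 _ _ HQdyn HYdyn.
  assert (Htau : 0 < dx / v) by (apply Rdiv_lt_0_compat; lra).
  assert (Htau_w : 0 < dx / w) by (apply Rdiv_lt_0_compat; lra).
  assert (Hq : 0 < qmax * dx / v) by (apply Rdiv_lt_0_compat; [nra|lra]).
  pose proof (Q_above _ _ _ _ _ _ _ Htau Hq (proj2 HUf) HQf HQdyn) as HQU.
  intros i Hi t Ht; destruct i as [|[|i]]; [| |lia].
  - apply Rbar_le_trans with (Fin (- n + 0 + Q t)).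
    + apply service_entry_le with 0; [lia|lra| | |].
      * rewrite Rminus_0_r; apply HQU, Ht.
      * cbn [Hmat]; rewrite gamma_0; apply Rbar_le_refl.
      * cbn [Cmat]; rewrite e_0; apply Rbar_le_refl.
    + pose proof (Zfw_ge _ _ _ _ _ _ _ _ _ _ _ Htau Hn (proj2 HUf) HQf Ub0 HQdyn HYdyn t Ht).
      simpl; lra.
  - destruct (Rmax_sub_0_bounds t (dx / w) Ht (Rlt_le _ _ Htau_w)) as [Ht' Htt'].
    set (t' := Rmax (t - dx / w) 0) in *.
    apply Rbar_le_trans with (Fin (- (nmax - n) + (nmax - n) + Q t')).
    + apply service_entry_le with (t - t'); [lia|lra| | |].
      * replace (t - (t - t')) with t' by ring; apply HQU, Ht'.
      * cbn [Hmat]; rewrite gamma_0; apply Rbar_le_refl.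
      * cbn [Cmat]; rewrite conv_gamma_delta by lra; apply Rbar_le_refl.
    + pose proof (Zbw_ge _ _ _ _ _ _ _ _ _ _ _ Htau Htau_w (proj2 HUf) HQf Ub0 HQdyn HYdyn t Ht)
        as Hz.
      fold t' in Hz; simpl; lra.
Qed.
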